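(* Let $p$ be a positive stochastic choice function for which $\sim_p$ is transitive. If $p$ exhibits the similarity effect, then $p$ satisfies Similar Regularity.
   Context: $X$ is a finite set, $\mathscr{A}$ the nonempty subsets; $p:X\times\mathscr{A}\to[0,1]$ with $\sum_{a\in A}p(a,A)=1$, $p(x,A)=0$ for $x\notin A$, $p(a,A)>0$ for $a\in A$; $A\cup x=A\cup\{x\}$. $a\sim_p b$ means $\frac{p(a,A)}{p(b,A)}=\frac{p(a,\{a,b\})}{p(b,\{a,b\})}$ for every $A\in\mathscr{A}$ containing $a,b$. Similarity effect: for all $A\in\mathscr{A}$, $a,b\in A$, $x\notin A$: if $a\sim_p x$ and $b\not\sim_p x$, then $\frac{p(a,A\cup x)}{p(b,A\cup x)}<\frac{p(a,A)}{p(b,A)}$. Similar Regularity: for any $A\in\mathscr{A}$, $x\in A$ and $y\in X$ with $x\sim_p y$, $p(x,A\cup y)\le p(x,A)$. *)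

From mathcomp Require Import all_boot all_order all_algebra.
Set Implicit Arguments. Unset Strict Implicit. Unset Printing Implicit Defensive.
Import Order.TTheory GRing.Theory Num.Theory.
Local Open Scope ring_scope.

(* Only nonempty menus A are in the domain
   (\mathscr{A}); values of p at the empty set are irrelevant. *)
Definition positive_scf (X : finType) (R : realFieldType)
    (p : X -> {set X} -> R) : Prop :=
  forall A : {set X}, A != set0 ->
    [/\ \sum_(a in A) p a A = 1,
        (forall x, x \notin A -> p x A = 0) &
        (forall a, a \in A -> 0 < p a A)].

Definition simp (X : finType) (R : realFieldType)
    (p : X -> {set X} -> R) (a b : X) : Prop :=
  forall A : {set X}, a \in A -> b \in A ->
    p a A / p b A = p a [set a; b] / p b [set a; b].

Definition simp_transitive (X : finType) (R : realFieldType)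
    (p : X -> {set X} -> R) : Prop :=
  forall a b c : X, simp p a b -> simp p b c -> simp p a c.

Definition similarity_effect (X : finType) (R : realFieldType)
    (p : X -> {set X} -> R) : Prop :=
  forall (A : {set X}) (a b x : X), A != set0 -> a \in A -> b \in A ->
    x \notin A -> simp p a x -> ~ simp p b x ->
    p a (x |: A) / p b (x |: A) < p a A / p b A.

Definition similar_regularity (X : finType) (R : realFieldType)
    (p : X -> {set X} -> R) : Prop :=
  forall (A : {set X}) (x y : X), A != set0 -> x \in A -> simp p x y ->
    p x (y |: A) <= p x A.

From mathcomp Require Import all_boot all_order all_algebra.
From Stdlib Require Import Classical.
Import Order.TTheory GRing.Theory Num.Theory.
Local Open Scope ring_scope.

(* Adding y to a menu A containing x, with x ~_p y, can only lower the odds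
   p(x)/p(a) against any a in A: if a ~_p y then a ~_p x by transitivity and
   the odds are unchanged, otherwise the similarity effect makes them drop.
   Summing p(a, A ∪ y) p(x, A) <= ... over a in A, and using that the a in A
   carry total mass at most 1 in A ∪ y, gives p(x, A ∪ y) <= p(x, A). *)

Section SimilarRegularity.

Variables (X : finType) (R : realFieldType) (p : X -> {set X} -> R).

Lemma simp_sym {a b} : simp p a b -> simp p b a.
Proof. by move=> h A hb ha; rewrite setUC -[p b A / _]invf_div h // invf_div. Qed.

Lemma setU1_neq0 (A : {set X}) y : y |: A != set0.
Proof. by apply/set0Pn; exists y; rewrite setU11. Qed.

Hypothesis p_pos : positive_scf p.

Lemma sum_le1_setU1 (A : {set X}) y :
  y \notin A -> \sum_(a in A) p a (y |: A) <= 1.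
Proof.
move=> yA; have [sB _ pB] := @p_pos (y |: A) (setU1_neq0 A y).
move: sB; rewrite big_setU1 //= => <-.
by rewrite lerDr ltW // pB // setU11.
Qed.

Hypotheses (p_trans : simp_transitive p) (p_sim : similarity_effect p).

Lemma odds_setU1 (A : {set X}) x y a :
  A != set0 -> x \in A -> a \in A -> y \notin A -> simp p x y ->
  p a A * p x (y |: A) <= p a (y |: A) * p x A.
Proof.
move=> A0 xA aA yA xy.
have [_ _ pA] := p_pos A A0; have [_ _ pB] := @p_pos (y |: A) (setU1_neq0 A y).
have inB b : b \in A -> b \in y |: A by move=> bA; rewrite setU1r.
have [pxA pxB] := (pA x xA, pB x (inB x xA)).
have [paA paB] := (pA a aA, pB a (inB a aA)).
have [ay | nay] := classic (simp p a y).
  have ax : simp p a x := p_trans _ _ _ ay (simp_sym xy).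
  have /eqP : p a A / p x A = p a (y |: A) / p x (y |: A).
    by rewrite ax // ax // inB.
  by rewrite eqr_div ?(gt_eqF pxA) ?(gt_eqF pxB) // => /eqP ->.
have := p_sim A x a y A0 xA aA yA xy nay.
rewrite ltr_pdivrMr // mulrAC ltr_pdivlMr // => /ltW.
by rewrite mulrC [p a (y |: A) * _]mulrC.
Qed.

End SimilarRegularity.

Theorem proposition7 (X : finType) (R : realFieldType) (p : X -> {set X} -> R) :
  positive_scf p -> simp_transitive p -> similarity_effect p ->
  similar_regularity p.
Proof.
move=> p_pos p_trans p_sim A x y A0 xA xy.
have [yA | yA] := boolP (y \in A); first by rewrite (setUidPr _) ?sub1set.
have [sA _ pA] := p_pos A A0.
have : \sum_(a in A) p a A * p x (y |: A) <= \sum_(a in A) p a (y |: A) * p x A.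
  by apply: ler_sum => a aA; apply: odds_setU1.
rewrite -!mulr_suml sA mul1r => /le_trans; apply.
by rewrite -[leRHS]mul1r ler_pM2r ?pA ?sum_le1_setU1.
Qed.
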